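(* Let $w$ be a word over a finite alphabet $A$, $H$ a graph on $A$ with loops allowed, and $G=G_{w,H}(u_1,\dots,u_n)$. Suppose $G$ is a strong $(\ell,d)$-graph and its sparsification $\phi(G)$ has a connected component $C$ with $|C|\ge(2d'^2\ell^2|H|^2+1)(m-1)+1$, where $d'=\max\{d,2\}$ and $m$ is a positive integer. Then $V(C)$ contains a set of $m$ consecutive integers.
   Context: For positive integers $u_1<\dots<u_n\le|w|$, $G_{w,H}(u_1,\dots,u_n)$ is the graph on $\{u_1,\dots,u_n\}$ in which $u_iu_j$ is an edge iff ($|u_i-u_j|=1$ and $w_{u_i}w_{u_j}\notin E(H)$) or ($|u_i-u_j|>1$ and $w_{u_i}w_{u_j}\in E(H)$) (for equal letters $a$, a loop at $a$); $|H|$ is the number of vertices of $H$. For $U,W\subseteq V(G)$ let $\Delta(U,W)=\max\{|N(u)\cap W|,|N(x)\cap U|:u\in U,x\in W\}$ and $\overline\Delta(U,W)$ the same with $\overline N(v)=V(G)\setminus(N(v)\cup\{v\})$ in place of $N$. A partition $\pi=\{V_1,\dots,V_{\ell'}\}$ of $V(G)$ is an $(\ell,d)$-partition if $\ell'\le\ell$ and for all not necessarily distinct $i,j$, $(V_i,V_j)$ is $d$-sparse ($\Delta(V_i,V_j)\le d$) or $d$-dense ($\overline\Delta(V_i,V_j)\le d$); it is strong if every bag has at least $5\cdot2^\ell d$ vertices; a strong $(\ell,d)$-graph admits one. Its density graph $H(G,\pi)$ has vertices $1,\dots,\ell'$ and an edge (loop when $i=j$) $ij$ iff $(V_i,V_j)$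 is $d$-dense. For a partition $\pi$ and graph $H'$ with loops on $\{1,\dots,\ell'\}$, $\psi(G,\pi,H')$ is obtained from $G$ by replacing the bipartite graph between $V_i$ and $V_j$ by its bipartite complement for each edge $ij$ of $H'$ with $i\neq j$, and replacing $G[V_i]$ by its complement for each loop at $i$. The sparsification is $\phi(G)=\psi(G,\pi,H(G,\pi))$ for any strong $(\ell,d)$-partition $\pi$ (it does not depend on the choice of $\pi$). *)

From mathcomp Require Import all_boot.
Set Implicit Arguments. Unset Strict Implicit. Unset Printing Implicit Defensive.

(* A graph G is given by a vertex set V : {set T} and an adjacency relation
   e : rel T (only pairs of distinct vertices of V matter). *)
Section GraphDefs.
Variable T : finType.

Definition nbhd (V : {set T}) (e : rel T) (v : T) : {set T} :=
  [set x in V | e v x].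
Definition conbhd (V : {set T}) (e : rel T) (v : T) : {set T} :=
  V :\: (nbhd V e v :|: [set v]).

Definition Delta_with (f : T -> {set T}) (U W : {set T}) : nat :=
  maxn (\max_(u in U) #|f u :&: W|) (\max_(x in W) #|f x :&: U|).

Definition Delta (V : {set T}) (e : rel T) U W := Delta_with (nbhd V e) U W.
Definition Deltabar (V : {set T}) (e : rel T) U W := Delta_with (conbhd V e) U W.

Definition sparse (V : {set T}) (e : rel T) (d : nat) U W := Delta V e U W <= d.
Definition dense (V : {set T}) (e : rel T) (d : nat) U W := Deltabar V e U W <= d.

Definition ld_partition (V : {set T}) (e : rel T) (l d : nat) (P : {set {set T}}) : Prop :=
  [/\ partition P V, #|P| <= l &
      forall B1 B2, B1 \in P -> B2 \in P -> sparse V e d B1 B2 \/ dense V e d B1 B2].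

Definition strong_partition (V : {set T}) (e : rel T) (l d : nat) (P : {set {set T}}) : Prop :=
  ld_partition V e l d P /\ forall B, B \in P -> 5 * 2 ^ l * d <= #|B|.

Definition strong_graph (V : {set T}) (e : rel T) (l d : nat) : Prop :=
  exists P, strong_partition V e l d P.

Definition density_graph (V : {set T}) (e : rel T) (d : nat) (P : {set {set T}}) : rel {set T} :=
  fun B1 B2 => dense V e d B1 B2.

Definition psi (V : {set T}) (e : rel T) (P : {set {set T}}) (H' : rel {set T}) : rel T :=
  fun u v => [&& u \in V, v \in V, u != v &
                 e u v (+) H' (pblock P u) (pblock P v)].

Definition sparsification (V : {set T}) (e : rel T) (d : nat) (P : {set {set T}}) : rel T :=
  psi V e P (density_graph V e d P).

Definition component (r : rel T) (V : {set T}) (x : T) : {set T} :=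
  [set y in V | connect (fun a b => [&& a \in V, b \in V & r a b]) x y].

Definition is_component (r : rel T) (V : {set T}) (C : {set T}) : Prop :=
  exists2 x, x \in V & C = component r V x.

End GraphDefs.

Definition natdist (a b : nat) : nat := (a - b) + (b - a).

(* G_{w,H}: positions of the word w (of length N) are encoded 0-based as
   'I_N (position i : 'I_N stands for the integer i+1); h is the (symmetric,
   loops allowed) edge relation of H on the alphabet A. *)
Definition Gw (A : finType) (N : nat) (w : N.-tuple A) (h : rel A) : rel 'I_N :=
  fun u v => (u != v) &&
    (((natdist u v == 1) && ~~ h (tnth w u) (tnth w v)) ||
     ((1 < natdist u v) && h (tnth w u) (tnth w v))).

From mathcomp Require Import all_boot zify.
Set Implicit Arguments. Unset Strict Implicit. Unset Printing Implicit Defensive.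

(* Call a vertex of the sparsification phi long if it has a phi-neighbour
   that is not adjacent to it in position.  Two long vertices with the same
   bag and the same letter have the same phi-adjacency to every vertex far
   from both, so each such class lies in the at most d phi-neighbours of a
   single vertex y inside the bag, or within distance 1 of y: there are at
   most |P| |A| (d + 3) long vertices.
   For a vertex y let E(y) be the set of c such that every integer between
   y and c is in C; if C has no m consecutive integers, |E(y)| < m.  Either
   C is covered by the E(y) with y long, or some c in C lies in no such
   E(y); then E(c) is closed under phi-edges, since short edges extend the
   interval and a long edge from a would put c in E(a), so C = E(c).  In
   both cases |C| <= (#long + 1) (m - 1). *)

Lemma leq_card_bigcup (I T : finType) (D : {pred I}) (F : I -> {set T}) k :
  (forall i, i \in D -> #|F i| <= k) -> #|\bigcup_(i in D) F i| <= #|D| * k.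
Proof.
move=> leFk; rewrite -sum_nat_const.
elim/big_rec2: _ => [|i S n Di leSn]; first by rewrite cards0.
by apply: leq_trans (leq_card_setU _ _).1 _; exact: leq_add (leFk i Di) leSn.
Qed.

Lemma natdistC a b : natdist a b = natdist b a.
Proof. by rewrite /natdist addnC. Qed.

Section Components.
Variables (T : finType) (r : rel T) (V : {set T}).

Lemma component_closed x a b :
  a \in component r V x -> b \in V -> r a b -> b \in component r V x.
Proof.
rewrite !inE => /andP[aV xa] bV rab; rewrite bV.
by apply: connect_trans xa (connect1 _); rewrite aV bV.
Qed.

Lemma component_subset x (S : {set T}) :
  x \in S -> (forall a b, a \in S -> a \in V -> b \in V -> r a b -> b \in S) ->
  component r V x \subset S.
Proof.
move=> xS closedS; apply/subsetP => y; rewrite inE => /andP[_ /connectP[p]].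
elim: p x xS => [|z p IHp] x xS /=; first by move=> _ ->.
by case/andP=> /and3P[xV zV rxz]; apply: IHp (closedS _ _ xS xV zV rxz).
Qed.

Lemma component_of_mem x y : symmetric r ->
  y \in component r V x -> component r V y = component r V x.
Proof.
move=> rC; rewrite inE => /andP[_ xy]; apply/setP => z; rewrite !inE.
have RC : connect_sym (fun a b => [&& a \in V, b \in V & r a b]).
  by apply: sym_connect_sym => a b; rewrite rC andbCA.
case: (z \in V) => //=; apply/idP/idP => [yz | xz]; first exact: connect_trans xy yz.
by rewrite RC in xy; exact: connect_trans xy xz.
Qed.

End Components.

Section Runs.
Variable N : nat.
Implicit Types (C S : {set 'I_N}) (a b c : 'I_N).

Lemma natdist_gt1_neq a b : 1 < natdist a b -> a != b.
Proof. by apply: contraTneq => ->; rewrite /natdist; lia. Qed.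

Lemma natdist_gt1 a b : a != b -> natdist a b != 1 -> 1 < natdist a b.
Proof.
move=> ab; have : nat_of_ord a <> b by move/val_inj=> ab'; rewrite ab' eqxx in ab.
by rewrite /natdist; lia.
Qed.

Definition has_run C m :=
  exists a : nat, forall k, k < m -> exists2 i : 'I_N, i \in C & val i = a + k.

Definition segment_in C a b :=
  [forall k : 'I_N, (minn a b <= k <= maxn a b) ==> (k \in C)].

Lemma card_window S (a k : nat) : {in S, forall z : 'I_N, a <= z < a + k} -> #|S| <= k.
Proof.
move=> inS; rewrite cardE -(size_map val) -(size_iota a k).
apply: uniq_leq_size => [|n /mapP[z]].
  by rewrite map_inj_uniq ?enum_uniq //; exact: val_inj.
by rewrite mem_enum mem_iota => zS ->; exact: inS.
Qed.

Lemma has_run_of_convex C S m :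
  (forall x z, x \in S -> z \in S -> forall k : 'I_N, x <= k <= z -> k \in C) ->
  m <= #|S| -> has_run C m.
Proof.
move=> convS mS; have [-> | m0] := posnP m; first by exists 0.
have [y yS] : exists y, y \in S by apply/card_gt0P; exact: leq_trans mS.
case: (arg_minnP val yS) => a aS amin.
have [/exists_inP[z zS az] | /exists_inPn short] := boolP [exists z in S, a + m.-1 <= z].
  exists a => k km; have kN : a + k < N by have := ltn_ord z; lia.
  by exists (Ordinal kN) => //; apply: (convS a z) => //=; lia.
suff : #|S| <= m.-1 by lia.
by apply: (card_window (a := a)) => z zS; rewrite amin //= ltnNge (short z zS).
Qed.

Lemma segment_inC C a b : segment_in C a b = segment_in C b a.
Proof. by rewrite /segment_in minnC maxnC. Qed.

Lemma segment_in_refl C a : segment_in C a a = (a \in C).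
Proof.
rewrite /segment_in minnn maxnn; apply/forallP/idP => [/(_ a) | aC k].
  by rewrite leqnn implyTb.
by apply/implyP => /andP[ak ka]; rewrite (_ : k = a) //; apply/val_inj/eqP; rewrite eqn_leq ka.
Qed.

Lemma segment_in_memr C a b : segment_in C a b -> b \in C.
Proof. by move/forallP/(_ b)/implyP; apply; rewrite geq_minr leq_maxr. Qed.

Lemma segment_in_step C c a b :
  segment_in C c a -> natdist a b = 1 -> b \in C -> segment_in C c b.
Proof.
move=> /forallP ca ab bC; apply/forallP => k; apply/implyP => kcb.
have [-> // | kb] := eqVneq k b; apply: (implyP (ca k)).
have : nat_of_ord k <> b by move/val_inj=> kb'; rewrite kb' eqxx in kb.
by move: ab kcb; rewrite /natdist; lia.
Qed.

Lemma segment_in_convex C y x z (k : 'I_N) :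
  segment_in C y x -> segment_in C y z -> x <= k <= z -> k \in C.
Proof.
move=> /forallP xy /forallP zy xkz; have [ky | yk] := leqP k y.
  by apply: (implyP (xy k)); lia.
by apply: (implyP (zy k)); lia.
Qed.

Definition long_ends (r : rel 'I_N) := [set a | [exists b, r a b && (natdist a b != 1)]].

Lemma run_in_component (r : rel 'I_N) V x m : symmetric r ->
  (#|long_ends r|).+1 * (m - 1) < #|component r V x| ->
  has_run (component r V x) m.
Proof.
set C := component r V x => rC bigC; pose E y := [set c | segment_in C y c].
have [/existsP[y mEy] | /existsPn shortE] := boolP [exists y, m <= #|E y|].
  apply: (has_run_of_convex _ mEy) => c c' cE c'E k; rewrite !inE in cE c'E.
  exact: segment_in_convex cE c'E.
have {}shortE y : #|E y| <= m - 1 by have := shortE y; rewrite -ltnNge; lia.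
have [/forall_inP covered | /forall_inPn[c cC notE]] :=
  boolP [forall c in C, [exists y in long_ends r, c \in E y]].
  suff : #|C| <= #|long_ends r| * (m - 1) by move=> ?; exfalso; nia.
  apply: leq_trans (leq_card_bigcup (fun y _ => shortE y)).
  apply/subset_leq_card/subsetP => c /covered/exists_inP[y yL cEy].
  by apply/bigcupP; exists y.
suff /subset_leq_card : C \subset E c by have := shortE c; move=> ? ?; exfalso; nia.
rewrite /C -(component_of_mem rC cC); apply: component_subset => [|a b].
  by rewrite inE segment_in_refl.
rewrite !inE => aE _ bV rab.
have bC : b \in C by apply: component_closed bV rab; exact: segment_in_memr aE.
have [ab1 | ab1] := eqVneq (natdist a b) 1; first exact: segment_in_step aE ab1 bC.
case/exists_inP: notE; exists a; last by rewrite inE segment_inC.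
by rewrite inE; apply/existsP; exists b; rewrite rab.
Qed.

End Runs.

Section Sparsification.
Variables (T : finType) (V : {set T}) (e : rel T) (l d : nat) (P : {set {set T}}).

Lemma denseC B1 B2 : dense V e d B1 B2 = dense V e d B2 B1.
Proof. by rewrite /dense /Deltabar /Delta_with maxnC. Qed.

Lemma sparsification_sym : symmetric e -> symmetric (sparsification V e d P).
Proof.
move=> eC u v; rewrite /sparsification /psi /density_graph eC denseC eq_sym.
by case: (u \in V); case: (v \in V).
Qed.

Lemma leq_Delta_with (f : T -> {set T}) (U W : {set T}) u :
  u \in U -> #|f u :&: W| <= Delta_with f U W.
Proof.
move=> uU; apply: leq_trans (leq_maxl _ _).
exact: (@leq_bigmax_cond _ (mem U) (fun v => #|f v :&: W|) u uU).
Qed.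

Hypothesis ldP : ld_partition V e l d P.

Lemma card_sparsification_nbhd y B : y \in V -> B \in P ->
  #|[set z in B | sparsification V e d P y z]| <= d.
Proof.
case: ldP => /and3P[/eqP coverP trivP _] _ sparse_dense yV BP.
have yBy : y \in pblock P y by rewrite mem_pblock coverP.
have pblockB z : z \in B -> pblock P z = B by exact: def_pblock.
have [dense_yB | not_dense] := boolP (dense V e d (pblock P y) B).
  apply: leq_trans (leq_trans (leq_Delta_with (conbhd V e) B yBy) dense_yB).
  apply/subset_leq_card/subsetP => z.
  rewrite !inE /sparsification /psi /density_graph => /andP[zB].
  rewrite (pblockB z zB) dense_yB addbT => /and4P[_ zV yz /negbTE eyz].
  by rewrite zB eyz eq_sym (negbTE yz) zV.
have sparse_yB : sparse V e d (pblock P y) B.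
  have yP : pblock P y \in P by rewrite pblock_mem ?coverP.
  by case: (sparse_dense _ _ yP BP) => // dense_yB; rewrite dense_yB in not_dense.
apply: leq_trans (leq_trans (leq_Delta_with (nbhd V e) B yBy) sparse_yB).
apply/subset_leq_card/subsetP => z.
rewrite !inE /sparsification /psi /density_graph => /andP[zB].
by rewrite (pblockB z zB) (negbTE not_dense) addbF => /and4P[_ zV _ ->]; rewrite zB zV.
Qed.

End Sparsification.

Section WordGraph.
Variables (A : finType) (N : nat) (w : N.-tuple A) (h : rel A).

Lemma Gw_sym : symmetric h -> symmetric (Gw w h).
Proof. by move=> hC a b; rewrite /Gw natdistC eq_sym hC. Qed.

Lemma Gw_far (a b : 'I_N) : 1 < natdist a b -> Gw w h a b = h (tnth w a) (tnth w b).
Proof. by move=> far; rewrite /Gw natdist_gt1_neq // far; case: eqP => //; lia. Qed.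

Variables (U : {set 'I_N}) (l d : nat) (P : {set {set 'I_N}}).
Let phi := sparsification U (Gw w h) d P.

Lemma sparsification_Gw_far (a a' y : 'I_N) : a \in U -> a' \in U ->
  tnth w a = tnth w a' -> pblock P a = pblock P a' ->
  1 < natdist a y -> 1 < natdist a' y -> phi a y = phi a' y.
Proof.
move=> aU a'U wa Pa far far'.
rewrite /phi /sparsification /psi aU a'U (Gw_far far) (Gw_far far') wa Pa.
by rewrite !natdist_gt1_neq.
Qed.

Hypothesis hC : symmetric h.

Lemma sparsification_Gw_sym : symmetric phi.
Proof. exact: sparsification_sym (Gw_sym hC). Qed.

Hypothesis ldP : ld_partition U (Gw w h) l d P.

Lemma card_long_ends_class B x : B \in P ->
  #|[set a in long_ends phi | (a \in B) && (tnth w a == x)]| <= d + 3.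
Proof.
set S := [set a in _ | _] => BP; have [-> | [v]] := set_0Vmem S; first by rewrite cards0.
rewrite !inE => /and3P[/existsP[y /andP[phi_vy vy1]] vB /eqP wv].
have /and4P[vU yU vy _] := phi_vy.
have far_vy := natdist_gt1 vy vy1.
have [/and3P[/eqP coverP trivP _] _ _] := ldP.
apply: (@leq_trans #|[set z in B | phi y z] :|: [set z : 'I_N | natdist z y <= 1]|).
  apply/subset_leq_card/subsetP => z; rewrite !inE => /and3P[_ zB /eqP wz].
  have [_ | far_zy] := leqP (natdist z y) 1; first by rewrite orbT.
  have zU : z \in U by rewrite -coverP; apply/bigcupP; exists B.
  rewrite zB sparsification_Gw_sym orbF.
  rewrite (sparsification_Gw_far zU vU _ _ far_zy far_vy) ?wz ?wv //.
  by rewrite !(def_pblock trivP BP).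
apply: leq_trans (leq_card_setU _ _).1 _.
apply: leq_add; first by have := card_sparsification_nbhd ldP yU BP.
by apply: (card_window (a := y.-1)) => z; rewrite inE /natdist; lia.
Qed.

Lemma card_long_ends : #|long_ends phi| <= #|P| * #|A| * (d + 3).
Proof.
have [/and3P[/eqP coverP _ _] _ _] := ldP.
pose S (p : {set 'I_N} * A) := [set a in long_ends phi | (a \in p.1) && (tnth w a == p.2)].
rewrite -(cardsT A) -cardsX; apply: (@leq_trans #|\bigcup_(p in setX P [set: A]) S p|).
  apply/subset_leq_card/subsetP => a aL.
  have aU : a \in U by move: aL; rewrite inE => /existsP[b /andP[/and4P[]]].
  apply/bigcupP; exists (pblock P a, tnth w a); last by rewrite inE aL mem_pblock coverP aU eqxx.
  by rewrite inE /= pblock_mem ?coverP ?inE.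
apply: leq_card_bigcup => -[B x]; rewrite inE => /andP[BP _].
exact: card_long_ends_class.
Qed.

End WordGraph.

Lemma leq_class_count (p a l d : nat) :
  p <= l -> p * a * (d + 3) <= 2 * maxn d 2 ^ 2 * l ^ 2 * a ^ 2.
Proof.
move=> pl; have : d + 3 <= 2 * maxn d 2 ^ 2.
  by have := leq_maxl d 2; have := leq_maxr d 2; move: (maxn d 2) => D; nia.
move: (maxn d 2) => D dD.
apply: leq_trans (leq_mul (leq_mul pl (leqnn a)) dD) _.
have -> : 2 * D ^ 2 * l ^ 2 * a ^ 2 = l * a * (l * a) * (2 * D ^ 2) by nia.
by apply: leq_mul => //; case: (l * a) => // n; rewrite leq_pmulr.
Qed.

Theorem lemma3p9 (A : finType) (N : nat) (w : N.-tuple A) (h : rel A)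
  (U : {set 'I_N}) (l d m : nat) :
  symmetric h -> 0 < m ->
  strong_graph U (Gw w h) l d ->
  forall P : {set {set 'I_N}}, strong_partition U (Gw w h) l d P ->
  forall C : {set 'I_N}, is_component (sparsification U (Gw w h) d P) U C ->
  (2 * (maxn d 2) ^ 2 * l ^ 2 * #|A| ^ 2 + 1) * (m - 1) + 1 <= #|C| ->
  exists a : nat, forall k, k < m -> exists2 i : 'I_N, i \in C & val i = a + k.
Proof.
(* Only the (l,d)-partition property of P is needed, not the bag sizes. *)
move=> hC _ _ P [ldP _] C [x _ ->] bigC.
apply: run_in_component; first exact: sparsification_Gw_sym.
have PL : #|P| <= l by case: ldP.
have LX := leq_trans (card_long_ends hC ldP) (leq_class_count #|A| d PL).
by apply: leq_trans bigC; rewrite addn1 ltnS leq_mul2r addn1 ltnS LX orbT.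
Qed.
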